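(* There is a deterministic sorting algorithm with error $2$ that, given $n$ elements, uses at most $4 n^{3/2}$ comparisons; that is, it outputs a $2$-sorted ordering of the elements.
   Context: Model of imprecise comparisons: there are $n$ elements, each with a fixed unknown real value; we identify an element with its value. Asked to compare $x_i$ and $x_j$, the comparator answers either ''$x_i \ge x_j$'' or ''$x_j \ge x_i$''. If $|x_i-x_j|>1$ the answer is correct; if $|x_i-x_j|\le 1$ the answer is arbitrary (possibly adversarial and adaptive). An ordering $x_{\pi(1)},\dots,x_{\pi(n)}$ is $k$-sorted if $x_{\pi(i)} \ge x_{\pi(j)} - k$ for every $i>j$. Comparison bounds are worst case over inputs and comparator behaviours. *)

From HB Require Import structures.
From mathcomp Require Import all_boot all_order all_algebra all_fingroup.
From mathcomp Require Import reals.
Set Implicit Arguments. Unset Strict Implicit. Unset Printing Implicit Defensive.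
Import Order.TTheory GRing.Theory Num.Theory.
Local Open Scope ring_scope.

(* A deterministic comparison algorithm on n elements (indexed by 'I_n) is a
   finite decision tree.  [Node i j t1 t2] asks the comparator to compare
   x_i and x_j; the answer "x_i >= x_j" continues with t1, the answer
   "x_j >= x_i" continues with t2.  A [Leaf p] outputs the ordering
   x_{p 0}, x_{p 1}, ..., x_{p (n-1)}. *)
Inductive dtree (n : nat) : Type :=
  | Leaf of {perm 'I_n}
  | Node of 'I_n & 'I_n & dtree n & dtree n.

(* [run x t c p] : on input values x, for some behaviour of the imprecise
   comparator (an answer is forced to be correct only when the two values
   differ by more than 1; otherwise arbitrary / adversarial / adaptive),
   the algorithm t performs exactly c comparisons and outputs p. *)
Inductive run (R : realType) (n : nat) (x : 'I_n -> R) :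
    dtree n -> nat -> {perm 'I_n} -> Prop :=
  | run_leaf (p : {perm 'I_n}) : run x (Leaf p) 0 p
  | run_ge (i j : 'I_n) (t1 t2 : dtree n) (c : nat) (p : {perm 'I_n}) :
      ~ (x j - x i > 1) -> run x t1 c p -> run x (Node i j t1 t2) c.+1 p
  | run_le (i j : 'I_n) (t1 t2 : dtree n) (c : nat) (p : {perm 'I_n}) :
      ~ (x i - x j > 1) -> run x t2 c p -> run x (Node i j t1 t2) c.+1 p.

Definition ksorted (R : realType) (n : nat) (k : R) (x : 'I_n -> R)
    (p : {perm 'I_n}) : Prop :=
  forall a b : 'I_n, (b < a)%N -> x (p b) - k <= x (p a).

From mathcomp Require Import all_boot all_order all_algebra all_fingroup.
From mathcomp Require Import reals.
From mathcomp Require Import ring lra zify.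
Set Implicit Arguments. Unset Strict Implicit. Unset Printing Implicit Defensive.
Import Order.TTheory GRing.Theory Num.Theory.

(** Quicksort with a well-chosen pivot, never repeating a comparison.  With
    q = floor(sqrt(n)/3), a round-robin tournament among the first 4q+1
    elements S of the current list yields a pivot v with at least q wins and q
    losses inside S.  Comparing v with everything splits the list into the
    elements z answered "x_v >= x_z" (so x_z <= x_v + 1) and those answered
    "x_z >= x_v" (so x_v <= x_z + 1); sorting both parts recursively and
    concatenating them around v gives a 2-sorted order.  Both parts keep the
    order of the list, so each begins with its share of S, of sizes r and
    4q - r with r, 4q - r >= q, and these shares are already compared
    pairwise: the next two tournaments save C(r,2) + C(4q-r,2) >= 4q^2 - 2q of
    their comparisons.  This saving makes
    m^2/(2q+2) + 5qm - 4q(q-1) - C(r,2) an upper bound for the cost on m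
    elements whose first r are compared pairwise, and for 9q^2 <= n < 9(q+1)^2
    its value at (n, 0) is below 4 n^(3/2). *)

Section Tournament.
Variables (T : eqType) (beats : rel T).

Definition balanced q (S : seq T) v := (q <= count (beats v) S) && (q <= count (beats^~ v) S).

Lemma count_sum (a : pred T) s : count a s = \sum_(z <- s) a z.
Proof. by elim: s => [|z s IH]; rewrite ?big_nil ?big_cons //= IH. Qed.

Lemma total_sum_wins L : uniq L ->
  {in L &, forall u w, u != w -> beats u w || beats w u} ->
  size L * (size L).-1 <= 2 * \sum_(u <- L) count (beats u) L.
Proof.
elim: L => [|w L IH] //= /andP[wL uL] tot.
have totL : {in L &, forall u v, u != v -> beats u v || beats v u}.
  by move=> u v hu hv; apply: tot; rewrite inE ?hu ?hv orbT.
have pair_wins : size L <= count (beats w) L + \sum_(u <- L) beats u w.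
  rewrite count_sum -big_split -sum1_size big_seq_cond [X in _ <= X]big_seq_cond.
  apply: leq_sum => u /andP[hu _].
  have nwu : w != u by apply: contraNneq wL => ->.
  have hu' : u \in w :: L by rewrite inE hu orbT.
  by move: (tot w u (mem_head _ _) hu' nwu); case: (beats w u); case: (beats u w).
have := IH uL totL; rewrite big_cons /=.
have -> : \sum_(u <- L) count (beats u) (w :: L) =
          \sum_(u <- L) beats u w + \sum_(u <- L) count (beats u) L.
  by rewrite -big_split.
move: pair_wins; case: (size L) => [|s] /=; nia.
Qed.

Lemma size_few_wins L q : uniq L ->
  {in L &, forall u w, u != w -> beats u w || beats w u} ->
  {in L, forall u, count (beats u) L < q} -> size L <= 2 * q.
Proof.
move=> uL tot few; have := total_sum_wins uL tot.
have : \sum_(u <- L) (count (beats u) L).+1 <= \sum_(u <- L) q.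
  by rewrite !big_seq; apply: leq_sum => u /few.
rewrite big_const_seq iter_addn_0 count_predT.
under eq_bigr do rewrite -addn1.
rewrite big_split /= -sum1_size; case: (size L) => [|s] /=; nia.
Qed.

Lemma size_filter_few_wins S q : uniq S ->
  {in S &, forall u w, u != w -> beats u w || beats w u} ->
  size [seq u <- S | count (beats u) S < q] <= 2 * q.
Proof.
move=> uS tot; apply: size_few_wins; first exact: filter_uniq.
  by move=> u w; rewrite !mem_filter => /andP[_ hu] /andP[_ hw]; apply: tot.
move=> u; rewrite mem_filter => /andP[few _]; apply: leq_ltn_trans few.
by rewrite count_filter; apply: sub_count => z /andP[].
Qed.

End Tournament.

Lemma has_balanced (T : eqType) (beats : rel T) S q : uniq S ->
  {in S &, forall u w, u != w -> beats u w || beats w u} ->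
  4 * q < size S -> has (balanced beats q S) S.
Proof.
move=> uS tot hS; apply/negPn/negP => /hasPn unbalanced.
have totC : {in S &, forall u w, u != w -> beats w u || beats u w}.
  by move=> u w hu hw nuw; rewrite orbC; apply: tot.
have := count_predUI (fun u => count (beats u) S < q) (fun u => count (beats^~ u) S < q) S.
have -> : count (predU (fun u => count (beats u) S < q) (fun u => count (beats^~ u) S < q)) S
          = size S.
  rewrite -count_predT; apply: eq_in_count => u /unbalanced.
  by rewrite /balanced negb_and -!ltnNge.
rewrite -!size_filter.
have := size_filter_few_wins q uS tot; have := size_filter_few_wins q uS totC; lia.
Qed.

Lemma count_take_bounds (T : Type) (P : pred T) s (A : seq T) :
  count P (take s A) <= size (filter P A) /\ count P (take s A) <= s.
Proof.
split; first by rewrite size_filter -{2}(cat_take_drop s A) count_cat leq_addr.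
by apply: leq_trans (count_size _ _) _; rewrite size_take_min geq_minl.
Qed.

Lemma filter_take_count (T : Type) (P : pred T) s (A : seq T) :
  filter P (take s A) = take (count P (take s A)) (filter P A).
Proof. by rewrite -{3}(cat_take_drop s A) filter_cat take_size_cat // size_filter. Qed.

Lemma perm_filter_pivot (T : eqType) (A : seq T) v (P Q : pred T) :
  uniq A -> v \in A -> ~~ P v -> ~~ Q v ->
  {in A, forall z, P z -> ~~ Q z} -> {in A, forall z, z != v -> P z || Q z} ->
  perm_eq (filter P A ++ v :: filter Q A) A.
Proof.
move=> uA vA nPv nQv disj cover; apply: uniq_perm => //.
  rewrite cat_uniq /= !filter_uniq // !mem_filter (negbTE nPv) (negbTE nQv) /= andbT.
  apply/hasPn => z; rewrite mem_filter => /andP[Qz zA] /=.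
  by rewrite mem_filter zA andbT; apply: contraL Qz; apply: disj.
move=> z; rewrite mem_cat inE !mem_filter.
have [->|nzv] := eqVneq z v; first by rewrite vA orbT.
by case: (boolP (z \in A)) => zA; rewrite ?andbF //= !andbT cover.
Qed.

Section Budget.
Variables (R : realType) (q : nat).
Local Open Scope ring_scope.

Definition pairs (m : nat) : R := 'C(m, 2)%:R.

Lemma pairsE m : pairs m = m%:R * (m%:R - 1) / 2.
Proof.
elim: m => [|m IH]; first by rewrite /pairs mul0r mul0r.
rewrite /pairs binS bin1 natrD -/(pairs m) IH -natr1; by field.
Qed.

Definition smooth_budget (m : nat) : R :=
  m%:R ^+ 2 / (2 * q%:R + 2) + 5 * q%:R * m%:R - 4 * q%:R * (q%:R - 1).

(* Bound on the cost of pivot_sort on m elements of which the first r are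
   already compared pairwise. *)
Definition budget (m r : nat) : R :=
  (if (m <= 4 * q + 1)%N then pairs m else smooth_budget m) - pairs r.

Lemma budget_le_smooth m r : (q <= m)%N -> budget m r <= smooth_budget m - pairs r.
Proof.
rewrite /budget lerD2r; case: ifP => // hm hq.
rewrite pairsE /smooth_budget.
have hm' : (m%:R : R) <= 4 * q%:R + 1 by rewrite -(ler_nat R) natrD natrM in hm.
have hq' : (q%:R : R) <= m%:R by rewrite ler_nat.
have hd : 0 < 2 * q%:R + 2 :> R by rewrite ltr_pwDr // mulr_ge0.
have h0 : 0 <= m%:R ^+ 2 / (2 * q%:R + 2) :> R by rewrite divr_ge0 ?sqr_ge0 ?ltW.
have hq0 : 0 <= q%:R :> R by [].
have hp : 0 <= (m%:R - q%:R) * (4 * q%:R + 1 - m%:R) :> R by rewrite mulr_ge0 ?subr_ge0.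
nra.
Qed.

Lemma budget_node m r a b ra rb : (4 * q + 1 < m)%N -> (a + b + 1 = m)%N ->
  (ra + rb = 4 * q)%N -> (q <= ra <= a)%N -> (q <= rb <= b)%N ->
  pairs (4 * q + 1) - pairs r + (m - (4 * q + 1))%:R + budget a ra + budget b rb
    <= budget m r.
Proof.
move=> hm hab hr /andP[hqa hra] /andP[hqb hrb].
have ha := budget_le_smooth ra (leq_trans hqa hra).
have hb := budget_le_smooth rb (leq_trans hqb hrb).
rewrite [budget m r]/budget leqNgt hm /= natrB ?(ltnW hm) // -hab.
rewrite /smooth_budget !pairsE in ha hb *.
have erb : (rb%:R : R) = 4 * q%:R - ra%:R.
  by apply/eqP; rewrite eq_sym subr_eq addrC -natrD hr natrM.
rewrite erb in hb.
set A := (a%:R : R); set B := (b%:R : R); set Q := (q%:R : R); set R1 := (ra%:R : R).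
have hQA : Q <= A by rewrite ler_nat (leq_trans hqa hra).
have hQB : Q <= B by rewrite ler_nat (leq_trans hqb hrb).
have hQ : 0 <= Q by [].
have hD : 0 < 2 * Q + 2 by lra.
have gain : A + B - Q <=
    (A + B + 1) ^+ 2 / (2 * Q + 2) - A ^+ 2 / (2 * Q + 2) - B ^+ 2 / (2 * Q + 2).
  rewrite -!mulrBl ler_pdivlMr //.
  have : 0 <= (A - Q) * (B - Q) by rewrite mulr_ge0 ?subr_ge0.
  nra.
have pairs_ra_rb : 4 * Q ^+ 2 - 2 * Q <=
    R1 * (R1 - 1) / 2 + (4 * Q - R1) * (4 * Q - R1 - 1) / 2.
  have : 0 <= (R1 - 2 * Q) ^+ 2 by apply: sqr_ge0.
  nra.
nra.
Qed.

Lemma budget_split m r a b ra rb : (a + b + 1 = m)%N ->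
  (if (m <= 4 * q + 1)%N then ra = a /\ rb = b
   else [/\ ra + rb = 4 * q, q <= ra <= a & q <= rb <= b])%N ->
  pairs (minn (4 * q + 1) m) - pairs r + (m - (4 * q + 1))%:R + budget a ra + budget b rb
    <= budget m r.
Proof.
move=> hab; case: ifP => hm; last first.
  by have hm' := negbT hm; rewrite -ltnNge in hm'; case; rewrite (minn_idPl (ltnW hm'));
    apply: budget_node.
case=> -> ->; rewrite (minn_idPr hm) (eqP hm) addr0 /budget hm.
by rewrite !ifT ?subrr ?addr0 //; apply: leq_trans hm; rewrite -hab; lia.
Qed.

Lemma budget_step m r a b ra rb ct cp clo chi : (a + b + 1 = m)%N ->
  (if (m <= 4 * q + 1)%N then ra = a /\ rb = b
   else [/\ ra + rb = 4 * q, q <= ra <= a & q <= rb <= b])%N ->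
  (ct + 'C(r, 2) <= 'C(minn (4 * q + 1) m, 2))%N -> (cp <= m - (4 * q + 1))%N ->
  clo%:R <= budget a ra -> chi%:R <= budget b rb -> (ct + (cp + (clo + chi)))%:R <= budget m r.
Proof.
move=> hab hside hct hcp hlo hhi; have := budget_split r hab hside.
move: hct hcp; rewrite -(ler_nat R) -[(cp <= _)%N](ler_nat R) !natrD /pairs; lra.
Qed.

Lemma budget_bound N : (9 * q ^ 2 <= N < 9 * q.+1 ^ 2)%N ->
  budget N 0 <= 4 * (N%:R * Num.sqrt N%:R).
Proof.
case/andP=> hlo hhi; have hqN : (q <= N)%N by nia.
apply: le_trans (budget_le_smooth 0 hqN) _.
rewrite pairsE mul0r mul0r subr0 /smooth_budget.
set t := Num.sqrt (N%:R : R); set Q := (q%:R : R).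
have ht0 : 0 <= t by apply: sqrtr_ge0.
have ht2 : t ^+ 2 = N%:R by apply: sqr_sqrtr.
have hlo' : 9 * Q ^+ 2 <= N%:R by rewrite /Q -natrX -natrM ler_nat.
have hhi' : N%:R < 9 * (Q + 1) ^+ 2 by rewrite /Q natr1 -natrX -natrM ltr_nat.
have hQ : 0 <= Q * (Q - 1).
  have [q0|q1] := posnP q; first by rewrite /Q q0 mul0r.
  have : 1 <= Q by rewrite ler1n.
  nra.
have h3q : 3 * Q <= t by nra.
have h3q1 : t < 3 * (Q + 1) by nra.
have hD : 0 < 2 * Q + 2 by lra.
have hsq : N%:R ^+ 2 / (2 * Q + 2) <= 3 / 2 * (N%:R * t).
  rewrite ler_pdivrMr // -ht2.
  have : 0 <= t * t * t * (3 * (Q + 1) - t) by rewrite !mulr_ge0 // subr_ge0 ltW.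
  nra.
nra.
Qed.

End Budget.

Section Programs.
Variable n : nat.

(* [kn i j]: the comparator has answered "x_i >= x_j". *)
Definition know := rel 'I_n.

(* Programs build the decision tree in continuation-passing style, threading
   the answers obtained so far. *)
Definition prog (A : Type) := know -> (know -> A -> dtree n) -> dtree n.

Definition ret A (a : A) : prog A := fun kn k => k kn a.

Definition bind A B (m : prog A) (f : A -> prog B) : prog B :=
  fun kn k => m kn (fun kn' a => f a kn' k).

Definition knowledge : prog know := fun kn k => k kn kn.

Definition known (kn : know) i j := kn i j || kn j i.

Definition learn (kn : know) i j : know := fun u w => kn u w || (u == i) && (w == j).

Definition compare (i j : 'I_n) : prog unit := fun kn k =>
  if (i == j) || known kn i j then k kn tt
  else Node i j (k (learn kn i j) tt) (k (learn kn j i) tt).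

Fixpoint compare_all (w : 'I_n) (us : seq 'I_n) : prog unit :=
  if us is u :: us' then bind (compare w u) (fun _ => compare_all w us') else ret tt.

Fixpoint tournament (pre rest : seq 'I_n) : prog unit :=
  if rest is w :: rest' then
    bind (compare_all w pre) (fun _ => tournament (rcons pre w) rest')
  else ret tt.

Section Sort.
Variable q : nat.

Definition pivot (kn : know) (S : seq 'I_n) (a : 'I_n) := nth a S (find (balanced kn q S) S).

(* The first r elements of A are already compared pairwise; fuel has to be at
   least the size of A. *)
Fixpoint pivot_sort (fuel r : nat) (A : seq 'I_n) : prog (seq 'I_n) :=
  if fuel is fuel'.+1 then
    if A is a :: _ then
      let S := take (4 * q + 1) A in
      bind (tournament (take r S) (drop r S)) (fun _ =>
      bind knowledge (fun kn =>
      let v := pivot kn S a in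
      bind (compare_all v A) (fun _ =>
      bind knowledge (fun kn' =>
      bind (pivot_sort fuel' (count (kn' v) S) [seq z <- A | kn' v z]) (fun lo =>
      bind (pivot_sort fuel' (count (kn'^~ v) S) [seq z <- A | kn' z v]) (fun hi =>
      ret (lo ++ v :: hi)))))))
    else ret [::]
  else ret [::].

End Sort.

Definition perm_of_seq (l : seq 'I_n) : {perm 'I_n} :=
  match @idP (injectiveb (fun i : 'I_n => nth i l i)) with
  | ReflectT inj => perm (injectiveP _ inj)
  | ReflectF _ => 1%g
  end.

End Programs.

Arguments ret {n A}.
Arguments bind {n A B}.
Arguments knowledge {n}.

Definition third_sqrt N := (Nat.sqrt N %/ 3)%N.

Lemma third_sqrtP N : (9 * third_sqrt N ^ 2 <= N < 9 * (third_sqrt N).+1 ^ 2)%N.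
Proof.
have [h1 h2] := PeanoNat.Nat.sqrt_spec' N.
have := divn_eq (Nat.sqrt N) 3; have := ltn_pmod (Nat.sqrt N) (isT : 0 < 3).
rewrite /third_sqrt -!mulnn; move: h1 h2.
set s := Nat.sqrt N; set k := (s %% 3)%N; set q := (s %/ 3)%N.
move=> h1 h2 hk es; rewrite es in h1 h2; nia.
Qed.

Definition sort2 (N : nat) : dtree N :=
  pivot_sort (third_sqrt N) N 0 (enum 'I_N) (fun _ _ => false) (fun _ l => Leaf (perm_of_seq l)).

Section Correctness.
Variables (R : realType) (n : nat) (x : 'I_n -> R).
Implicit Types (kn : know n) (i j u w : 'I_n).

Definition sound (kn : know n) := forall u w, kn u w -> ~~ kn w u /\ (x w - x u <= 1)%R.

Definition known_on (kn : know n) (S : seq 'I_n) :=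
  {in S &, forall u w, u != w -> known kn u w}.

Definition wp A (m : prog n A) (kn : know n) (Q : know n -> A -> nat -> Prop) :=
  forall k c p, run x (m kn k) c p -> exists kn' a c1 c2,
    [/\ c = c1 + c2, sound kn', subrel kn kn', Q kn' a c1 & run x (k kn' a) c2 p].

Lemma wp_ret A (a : A) kn Q : sound kn -> Q kn a 0 -> wp (ret a) kn Q.
Proof. by move=> skn hQ k c p hr; exists kn, a, 0, c; split. Qed.

Lemma wp_knowledge A (f : know n -> prog n A) kn Q : wp (f kn) kn Q -> wp (bind knowledge f) kn Q.
Proof. by []. Qed.

Lemma wp_bind A B (m : prog n A) (f : A -> prog n B) kn Q1 Q :
  wp m kn Q1 ->
  (forall kn' a c1, sound kn' -> subrel kn kn' -> Q1 kn' a c1 ->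
     wp (f a) kn' (fun kn'' b c2 => Q kn'' b (c1 + c2))) ->
  wp (bind m f) kn Q.
Proof.
move=> hm hf k c p /hm[kn1 [a [c1 [c2 [-> s1 sub1 q1 r1]]]]].
have [kn2 [b [c3 [c4 [-> s2 sub2 q2 r2]]]]] := hf _ _ _ s1 sub1 q1 _ _ _ r1.
exists kn2, b, (c1 + c3), c4; split=> //; first by rewrite addnA.
by move=> u w /sub1 /sub2.
Qed.

Lemma wp_conseq A (m : prog n A) kn Q Q' :
  wp m kn Q -> (forall kn' a c, subrel kn kn' -> Q kn' a c -> Q' kn' a c) -> wp m kn Q'.
Proof.
move=> hm hQ k c p /hm[kn' [a [c1 [c2 [-> s' sub' q' r']]]]].
by exists kn', a, c1, c2; split=> //; apply: hQ.
Qed.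

Lemma sound_irr kn u : sound kn -> kn u u = false.
Proof. by move=> skn; apply/negP=> kuu; case: (skn u u kuu); rewrite kuu. Qed.

Lemma known_subrel kn kn' u w : subrel kn kn' -> known kn u w -> known kn' u w.
Proof. by rewrite /known => sub /orP[/sub|/sub] ->; rewrite ?orbT. Qed.

Lemma knownC kn u w : known kn u w = known kn w u.
Proof. exact: orbC. Qed.

Lemma run_LeafE p' c p : run x (Leaf p') c p -> c = 0 /\ p = p'.
Proof. by move=> hr; inversion hr. Qed.

Lemma run_NodeE i j t1 t2 c p : run x (Node i j t1 t2) c p ->
  exists2 c', c = c'.+1 &
    ((x j - x i <= 1)%R /\ run x t1 c' p) \/ ((x i - x j <= 1)%R /\ run x t2 c' p).
Proof.
move=> hr; inversion hr; subst; exists c0 => //.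
  by left; split=> //; rewrite leNgt; apply/negP.
by right; split=> //; rewrite leNgt; apply/negP.
Qed.

Lemma sound_learn kn i j :
  sound kn -> i != j -> ~~ known kn i j -> (x j - x i <= 1)%R -> sound (learn kn i j).
Proof.
move=> skn nij; rewrite /known negb_or => /andP[nkij nkji] hx u w.
case/orP=> [kuw|/andP[/eqP-> /eqP->]]; last by rewrite /learn (negbTE nkji) eq_sym (negbTE nij).
have [nkwu hxuw] := skn u w kuw; split=> //; rewrite /learn (negbTE nkwu) /=.
by apply/negP=> /andP[/eqP ew /eqP eu]; move: nkji; rewrite -eu -ew kuw.
Qed.

Lemma wp_compare i j kn : sound kn ->
  wp (compare i j) kn (fun kn' _ c =>
    (i != j -> known kn' i j) /\ c <= (i != j) && ~~ known kn i j).
Proof.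
move=> skn k c p; rewrite /compare; case: ifP => [hk|/norP[nij nk]] hr.
  exists kn, tt, 0, c; split=> //; split=> // /negbTE nij.
  by move: hk; rewrite nij.
have [c' -> [[hx hr']|[hx hr']]] := run_NodeE hr.
  exists (learn kn i j), tt, 1, c'; split=> //; first exact: sound_learn.
    by move=> u w kuw; apply/orP; left.
  by split=> [_|]; rewrite ?nij ?nk // /known /learn !eqxx !orbT.
have nji : j != i by rewrite eq_sym.
have nk' : ~~ known kn j i by rewrite /known orbC.
exists (learn kn j i), tt, 1, c'; split=> //; first exact: sound_learn.
  by move=> u w kuw; apply/orP; left.
by split=> [_|]; rewrite ?nij ?nk // /known /learn !eqxx !orbT.
Qed.

Lemma wp_compare_all w us kn : sound kn ->
  wp (compare_all w us) kn (fun kn' _ c =>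
    {in us, forall u, w != u -> known kn' w u} /\
    c <= count (fun u => (w != u) && ~~ known kn w u) us).
Proof.
elim: us kn => [|u us IH] kn skn /=; first by apply: wp_ret.
apply: wp_bind (wp_compare skn) _ => kn1 [] c1 s1 sub1 [k1 hc1].
apply: wp_conseq (IH _ s1) _ => kn2 [] c2 sub2 [k2 hc2]; split.
  move=> u'; rewrite inE => /orP[/eqP-> /k1|]; last exact: k2.
  exact: known_subrel.
apply: leq_add hc1 (leq_trans hc2 _); apply: sub_count => u' /= /andP[-> /=].
by apply: contra; apply: known_subrel.
Qed.

Lemma known_on_rcons kn pre w :
  known_on kn pre -> {in pre, forall u, w != u -> known kn w u} ->
  known_on kn (rcons pre w).
Proof.
move=> kpre kw u v; rewrite !mem_rcons !inE.
case/orP=> [/eqP->|hu] /orP[/eqP->|hv]; rewrite ?eqxx // => nuv.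
- exact: kw.
- by rewrite knownC; apply: kw; rewrite // eq_sym.
- exact: kpre.
Qed.

Lemma wp_tournament pre rest kn : sound kn -> known_on kn pre ->
  wp (tournament pre rest) kn (fun kn' _ c =>
    known_on kn' (pre ++ rest) /\ c + 'C(size pre, 2) <= 'C(size (pre ++ rest), 2)).
Proof.
elim: rest pre kn => [|w rest IH] pre kn skn kpre /=.
  by apply: wp_ret; rewrite ?cats0.
apply: wp_bind (wp_compare_all skn) _ => kn1 [] c1 s1 sub1 [k1 hc1].
have kpre1 : known_on kn1 (rcons pre w).
  apply: known_on_rcons k1 => u v hu hv nuv.
  exact: known_subrel sub1 (kpre u v hu hv nuv).
apply: wp_conseq (IH _ _ s1 kpre1) _ => kn2 [] c2 _; rewrite cat_rcons => -[k2 hc2].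
split=> //; move: hc2; rewrite size_rcons binS bin1.
have := leq_trans hc1 (count_size _ _); lia.
Qed.

Lemma known_on_subrel kn kn' S : subrel kn kn' -> known_on kn S -> known_on kn' S.
Proof. by move=> sub kS u w hu hw /(kS u w hu hw); apply: known_subrel. Qed.

Lemma known_on_prefix_filter kn (P : pred 'I_n) s A :
  known_on kn (take s A) -> known_on kn (take (count P (take s A)) (filter P A)).
Proof.
rewrite -filter_take_count => kS u w; rewrite !mem_filter => /andP[_ hu] /andP[_ hw].
exact: kS.
Qed.

Lemma perm_pivot_partition kn A v : sound kn -> uniq A -> v \in A ->
  {in A, forall z, v != z -> known kn v z} ->
  perm_eq ([seq z <- A | kn v z] ++ v :: [seq z <- A | kn z v]) A.
Proof.
move=> skn uA vA kv; apply: perm_filter_pivot; rewrite ?sound_irr //.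
  by move=> z _ /skn[].
by move=> z zA nzv; apply: kv; rewrite // eq_sym.
Qed.

Definition close u w := (x u - 2 <= x w)%R.

Lemma pairwise_close_pivot (lo hi : seq 'I_n) v :
  {in lo, forall u, x u - x v <= 1}%R -> {in hi, forall w, x v - x w <= 1}%R ->
  pairwise close lo -> pairwise close hi -> pairwise close (lo ++ v :: hi).
Proof.
move=> hlo hhi plo phi; rewrite pairwise_cat pairwise_cons plo phi !andbT.
apply/andP; split; last by apply/allP => w /hhi; rewrite /close; lra.
apply/allrelP => u w /hlo hu; rewrite inE /close => /orP[/eqP->|/hhi]; lra.
Qed.

Variable q : nat.

Lemma pivot_in kn S a : a \in S -> pivot q kn S a \in S.
Proof.
rewrite /pivot => aS; case: (ltnP (find (balanced kn q S) S) (size S)) => hf.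
  exact: mem_nth.
by rewrite nth_default.
Qed.

Lemma pivot_balanced kn S a : uniq S -> known_on kn S -> 4 * q < size S ->
  balanced kn q S (pivot q kn S a).
Proof. by move=> uS kS hS; apply: nth_find; apply: has_balanced. Qed.

Lemma count_unknown_drop kn s A v : known_on kn (take s A) -> v \in take s A ->
  count (fun u => (v != u) && ~~ known kn v u) A <= size A - s.
Proof.
move=> kS vS; rewrite -{1}(cat_take_drop s A) count_cat -size_drop.
have -> : count (fun u => (v != u) && ~~ known kn v u) (take s A) = 0.
  apply/eqP; rewrite -leqn0 leqNgt -has_count; apply/hasPn => z zS /=.
  by rewrite negb_and; case: eqVneq => //= nvz; rewrite negbK; apply: kS vS zS nvz.
exact: count_size.
Qed.

Lemma balanced_split_counts kn kn' S v : sound kn' -> subrel kn kn' -> uniq S -> v \in S ->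
  known_on kn S -> size S = 4 * q + 1 -> balanced kn q S v ->
  [/\ count (kn' v) S + count (kn'^~ v) S = 4 * q, q <= count (kn' v) S
    & q <= count (kn'^~ v) S].
Proof.
move=> skn' sub uS vS kS szS /andP[bl bh].
have pS := perm_pivot_partition skn' uS vS (fun z zS vz => known_subrel sub (kS v z vS zS vz)).
have eS : count (kn' v) S + (count (kn'^~ v) S).+1 = 4 * q + 1.
  by rewrite -szS -(perm_size pS) size_cat /= !size_filter.
split; first by move: eS; rewrite addnS addn1 => -[].
  by apply: leq_trans bl _; apply: sub_count => z /sub.
by apply: leq_trans bh _; apply: sub_count => z /sub.
Qed.

Lemma wp_pivot_sort fuel r (A : seq 'I_n) kn : sound kn -> uniq A -> size A <= fuel ->
  r <= size A -> r <= 4 * q + 1 -> known_on kn (take r A) ->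
  wp (pivot_sort q fuel r A) kn (fun _ l c =>
    [/\ perm_eq l A, pairwise close l & (c%:R <= budget R q (size A) r)%R]).
Proof.
elim: fuel kn r A => [|fuel IH] kn r [|a A'] skn uA hA hrA hrq kpre; cbn [pivot_sort] => //.
1,2: by apply: wp_ret; rewrite // leqn0 in hrA; rewrite (eqP hrA) /budget subrr.
set A := a :: A' in uA hA hrA kpre *; set S := take (4 * q + 1) A.
have uS : uniq S by apply: take_uniq.
have SA : {subset S <= A} by move=> z; apply: mem_take.
have hrS : r <= size S by rewrite size_take_min leq_min hrq hrA.
have kpreS : known_on kn (take r S) by rewrite /S take_takel.
apply: wp_bind (wp_tournament skn kpreS) _ => kn1 [] ct s1 sub1 [].
rewrite cat_take_drop size_takel // => kS hct.
apply: wp_knowledge; set v := pivot q kn1 S a.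
have vS : v \in S by apply: pivot_in; rewrite /S addn1 /= inE eqxx.
apply: wp_bind (wp_compare_all s1) _ => kn2 [] cp s2 sub2 [kv hcp].
apply: wp_knowledge.
set lo := [seq z <- A | kn2 v z]; set hi := [seq z <- A | kn2 z v].
have pA : perm_eq (lo ++ v :: hi) A := perm_pivot_partition s2 uA (SA _ vS) kv.
have kS2 : known_on kn2 S := known_on_subrel sub2 kS.
have hsize : size lo + size hi + 1 = size A.
  by rewrite -(perm_size pA) size_cat /= addn1 addnS.
have [rlo_le rlo_q] := count_take_bounds (kn2 v) (4 * q + 1) A.
have [rhi_le rhi_q] := count_take_bounds (kn2^~ v) (4 * q + 1) A.
have lo_fuel : size lo <= fuel by lia.
have hi_fuel : size hi <= fuel by lia.
apply: wp_bind (IH kn2 _ lo s2 (filter_uniq _ uA) lo_fuel rlo_le rlo_q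
                  (known_on_prefix_filter kS2)) _ => kn3 slo clo s3 sub3 [plo pwlo clo_le].
apply: wp_bind (IH kn3 _ hi s3 (filter_uniq _ uA) hi_fuel rhi_le rhi_q
                  (known_on_prefix_filter (known_on_subrel sub3 kS2))) _
  => kn4 shi chi s4 sub4 [phi pwhi chi_le].
apply: wp_ret => //; split.
- by apply: perm_trans pA; apply: perm_cat => //; rewrite perm_cons.
- apply: pairwise_close_pivot => // u.
    by rewrite (perm_mem plo) mem_filter => /andP[/s2[]].
  by rewrite (perm_mem phi) mem_filter => /andP[/s2[]].
have hside : if size A <= 4 * q + 1 then count (kn2 v) S = size lo /\ count (kn2^~ v) S = size hi
    else [/\ count (kn2 v) S + count (kn2^~ v) S = 4 * q,
              q <= count (kn2 v) S <= size lo & q <= count (kn2^~ v) S <= size hi].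
  case: ifP => hm; first by rewrite /S take_oversize // !size_filter.
  have szS : size S = 4 * q + 1 by rewrite size_takel // ltnW // ltnNge hm.
  have h4q : 4 * q < size S by rewrite szS addn1.
  have [e4q bl bh] := balanced_split_counts s2 sub2 uS vS kS szS (pivot_balanced a uS kS h4q).
  by split; rewrite ?bl ?bh.
rewrite addn0; apply: budget_step hsize hside _ _ clo_le chi_le.
  by rewrite -size_take_min.
exact: leq_trans hcp (count_unknown_drop kS vS).
Qed.

Lemma perm_of_seqE (l : seq 'I_n) i : uniq l -> size l = n -> perm_of_seq l i = nth i l i.
Proof.
move=> ul sl; rewrite /perm_of_seq.
destruct (@idP (injectiveb (fun i : 'I_n => nth i l i))) as [inj|ninj].
  by rewrite permE.
exfalso; apply: ninj; apply/injectiveP => u w.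
rewrite [nth w l w](set_nth_default u) ?sl ?ltn_ord // => /eqP.
by rewrite nth_uniq ?sl ?ltn_ord // => /eqP /val_inj.
Qed.

Lemma ksorted_perm_of_seq (l : seq 'I_n) :
  perm_eq l (enum 'I_n) -> pairwise close l -> ksorted 2 x (perm_of_seq l).
Proof.
move=> pl pw a b hba.
have ul : uniq l by rewrite (perm_uniq pl) enum_uniq.
have sl : size l = n by rewrite (perm_size pl) size_enum_ord.
rewrite !perm_of_seqE // (set_nth_default b a) ?sl ?ltn_ord //.
by move/pairwiseP: pw => /(_ b b a); apply; rewrite ?inE ?sl ?ltn_ord.
Qed.

End Correctness.

Local Open Scope ring_scope.

Theorem mainTheorem11 :
  exists A : forall n : nat, dtree n,
    forall (R : realType) (n : nat) (x : 'I_n -> R) (c : nat) (p : {perm 'I_n}),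
      run x (A n) c p ->
      (c%:R <= 4 * (n%:R * Num.sqrt n%:R) :> R) /\ ksorted 2 x p.
Proof.
exists sort2 => R n x c p hr.
have sound0 : sound x (fun _ _ : 'I_n => false) by [].
have known0 : known_on (fun _ _ : 'I_n => false) (take 0 (enum 'I_n)) by move=> u w; rewrite take0.
have [kn [l [c1 [c2 [-> _ _ [pl pw hc] /run_LeafE[-> ->]]]]]] :=
  @wp_pivot_sort R n x (third_sqrt n) n 0 (enum 'I_n) _ sound0 (enum_uniq _)
    (eq_leq (size_enum_ord n)) (leq0n _) (leq0n _) known0 _ _ _ hr.
split; last exact: ksorted_perm_of_seq.
rewrite addn0; apply: le_trans hc _; rewrite size_enum_ord.
exact: budget_bound (third_sqrtP n).
Qed.
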